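(* Let $(\mathcal T,\{B_i\})$ be a tree decomposition of a graph $G$, rooted at $r$, with every node at level at most $d$, and let $\lambda\in\{1,\dots,d\}$. Define new bags $$B'_v := \bigcup\big\{B_w : w\in\mathcal T_{v\leftrightarrow r},\ w\in \mathcal T_{v\leftrightarrow\sigma(v)} \text{ or } w \text{ is a synchronization node}\big\}$$ for $v\neq r$, and $B'_r := B_r$. Then $(\mathcal T,\{B'_v\})$ has combinatorial diameter at most $3$.
   Context: Tree decomposition: tree with bags covering vertices and edges of $G$, each vertex's bags forming a connected subtree. $\mathcal T_{x\leftrightarrow y}$ is the set of nodes on the unique $x$–$y$ path in $\mathcal T$. The level of a node $v$ is the number of edges on $\mathcal T_{v\leftrightarrow r}$. A node is a synchronization node if its level is a multiple of $\lambda$. For $v\neq r$, $\sigma(v)$ is the first synchronization node on the path from $v$ to $r$, excluding $v$. Combinatorial diameter: for nodes $s,t$ consider the path $\mathcal T_{s\leftrightarrow t}$. A non-endpoint node $v$ of the current path, with its two neighbours on the current path labelled $u,w$ (in some order), is redundant if $B_v\cap B_w\subseteq B_u$; bypassing $v$ deletes $v$ and joins $u,w$. The path has combinatorial length at most $\ell$ if repeatedly bypassing redundant nodes (redundancy evaluated in the current path) yields a path with at most $\ell$ edges. The combinatorial diameter is the minimum $\delta$ such that every path $\mathcal T_{u\leftrightarrow v}$ has combinatorial length at most $\delta$ (with respect to the given bags). *)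

From Stdlib Require Relations.
From mathcomp Require Import all_boot.

Set Implicit Arguments.
Unset Strict Implicit.
Unset Printing Implicit Defensive.

Definition is_tpath (N : finType) (e : rel N) (x y : N) (p : seq N) : bool :=
  [&& path e x p, last x p == y & uniq (x :: p)].

Definition is_tree (N : finType) (e : rel N) : Prop :=
  symmetric e /\ irreflexive e /\ (forall x y : N, exists! p, is_tpath e x y p).

Definition on_tpath (N : finType) (e : rel N) (x y w : N) : Prop :=
  exists p, is_tpath e x y p /\ w \in x :: p.

Definition level (N : finType) (e : rel N) (r v : N) (n : nat) : Prop :=
  exists p, is_tpath e v r p /\ size p = n.

Definition sync (N : finType) (e : rel N) (r : N) (lam : nat) (w : N) : Prop :=
  exists n, level e r w n /\ lam %| n.

(* sigma(v) = s: s is the first synchronization node on T_{v <-> r},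
   v itself excluded. *)
Definition is_sigma (N : finType) (e : rel N) (r : N) (lam : nat) (v s : N)
  : Prop :=
  exists p, [/\ is_tpath e v r p, s \in p, sync e r lam s &
    forall w, w \in take (index s p) p -> ~ sync e r lam w].

Definition tree_decomposition (V N : finType) (g : rel V) (e : rel N)
  (B : N -> {set V}) : Prop :=
  [/\ is_tree e,
      (forall x : V, exists t, x \in B t),
      (forall x y : V, g x y -> exists t, (x \in B t) && (y \in B t)) &
      (forall (x : V) (a b : N), x \in B a -> x \in B b ->
         exists p, [&& path e a p, last a p == b & all (fun w => x \in B w) p])].

Definition new_bag (V N : finType) (e : rel N) (r : N) (lam : nat)
  (B : N -> {set V}) (v : N) (x : V) : Prop :=
  if v == r then (x \in B r : Prop)
  else exists w, [/\ on_tpath e v r w, x \in B w &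
         (exists s, is_sigma e r lam v s /\ on_tpath e v s w)
         \/ sync e r lam w].

Definition bag_sub (V : Type) (P Q : V -> Prop) : Prop := forall x, P x -> Q x.

Definition bypass (V N : Type) (Bg : N -> V -> Prop) (s t : seq N) : Prop :=
  exists (a b : seq N) (u v w : N),
    [/\ s = a ++ [:: u; v; w] ++ b, t = a ++ [:: u; w] ++ b &
        bag_sub (fun x => Bg v x /\ Bg w x) (Bg u) \/
        bag_sub (fun x => Bg v x /\ Bg u x) (Bg w)].

Definition comb_length_le (V N : Type) (Bg : N -> V -> Prop) (s : seq N)
  (l : nat) : Prop :=
  exists t, Relation_Operators.clos_refl_trans (seq N) (bypass Bg) s t /\ (size t).-1 <= l.

Definition comb_diameter_le (V N : finType) (e : rel N) (Bg : N -> V -> Prop)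
  (delta : nat) : Prop :=
  forall (u v : N) (p : seq N), is_tpath e u v p ->
    comb_length_le Bg (u :: p) delta.

From mathcomp Require Import all_boot zify.
From Stdlib Require Import Relation_Operators.

(* A tree path from s to t climbs to its top node c and then descends to t.
   Let L be the smallest multiple of lam exceeding the level of c (levels
   grow away from the root). Every inner node of the climb other than the node
   at level L can be bypassed, from the top down: the new bag of a node whose
   level is not a multiple of lam is contained in that of its child, and for a
   synchronization node v the part of B'_v shared with the node at level L
   lies in the new bag of v's child, because the old bags containing a vertex
   form a subtree. Doing the same on the descent leaves s, s_L, c, t_L, t, and
   c is bypassed since s_L and t_L have the same ancestors above level L, so
   B'_c /\ B'_{t_L} is contained in B'_{s_L}. *)

Set Implicit Arguments.
Unset Strict Implicit.
Unset Printing Implicit Defensive.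

Local Notation reduces Bg := (clos_refl_trans _ (bypass Bg)).

Lemma rev_cat_cons (T : Type) (a b : seq T) x : rev (a ++ x :: b) = rev b ++ x :: rev a.
Proof. by rewrite rev_cat rev_cons cat_rcons. Qed.

Section Bypass.
Variables (V N : Type) (Bg : N -> V -> Prop).

Lemma bypass_rev s t : bypass Bg s t -> bypass Bg (rev s) (rev t).
Proof.
case=> a [b [u [v [w [-> -> H]]]]].
exists (rev b), (rev a), w, v, u; rewrite !rev_cat -!catA.
by split => //; case: H; [right | left].
Qed.

Lemma reduces_rev s t : reduces Bg s t -> reduces Bg (rev s) (rev t).
Proof.
elim=> [x y /bypass_rev|x|x y z _ IHxy _ IHyz]; [exact: rt_step | exact: rt_refl |].
exact: rt_trans IHxy IHyz.
Qed.

Lemma comb_length_le_reduces s t l :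
  reduces Bg s t -> comb_length_le Bg t l -> comb_length_le Bg s l.
Proof. by move=> st [t' [tt' size_t']]; exists t'; split; first exact: rt_trans st tt'. Qed.

End Bypass.

Section RootedTree.
Variables (N : finType) (e : rel N) (r : N).
Hypothesis e_tree : is_tree e.

Lemma tree_sym : symmetric e. Proof. by case: e_tree. Qed.

Lemma tpath_uniq x y p q : is_tpath e x y p -> is_tpath e x y q -> p = q.
Proof.
case: e_tree => _ [_ /(_ x y) [p0 [_ p0_uniq]]] hp hq.
by rewrite -(p0_uniq _ hp) -(p0_uniq _ hq).
Qed.

Lemma rpath_ex v : exists p, is_tpath e v r p.
Proof. by case: e_tree => _ [_ /(_ v r) [p [hp _]]]; exists p. Qed.

Definition rpath v := xchoose (rpath_ex v).
Definition parent v := head r (rpath v).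
Definition lev v := size (rpath v).

Lemma rpathP v : is_tpath e v r (rpath v). Proof. exact: xchooseP. Qed.

Lemma rpath_root : rpath r = [::].
Proof. by apply: tpath_uniq (rpathP r) _; rewrite /is_tpath /= eqxx. Qed.

Lemma rpath_cons v : v != r -> rpath v = parent v :: rpath (parent v).
Proof.
move=> vr; have := rpathP v; rewrite /parent.
case: (rpath v) => [|y q]; first by case/and3P => _ /eqP /= vr'; rewrite vr' eqxx in vr.
case/and3P => /andP[_ pq] lq /andP[_ uq].
by congr (_ :: _); apply: tpath_uniq (rpathP y); apply/and3P.
Qed.

Lemma parent_root : parent r = r. Proof. by rewrite /parent rpath_root. Qed.

Lemma lev_root : lev r = 0. Proof. by rewrite /lev rpath_root. Qed.

Lemma lev_gt0 v : (0 < lev v) = (v != r).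
Proof. by case: eqVneq => [->|vr]; rewrite ?lev_root // /lev rpath_cons. Qed.

Lemma lev_parent v : lev (parent v) = (lev v).-1.
Proof.
case: (eqVneq v r) => [->|vr]; first by rewrite parent_root lev_root.
by rewrite {2}/lev (rpath_cons vr).
Qed.

Lemma edge_parent v : v != r -> e v (parent v).
Proof. by move=> vr; have := rpathP v; rewrite (rpath_cons vr) => /and3P[/andP[]]. Qed.

Definition anc v k := iter k parent v.

Lemma anc_parent v k : anc (parent v) k = anc v k.+1.
Proof. by rewrite /anc iterSr. Qed.

Lemma ancD v a b : anc (anc v a) b = anc v (b + a). Proof. by rewrite /anc iterD. Qed.

Lemma lev_anc v k : lev (anc v k) = lev v - k.
Proof. by elim: k => [|k IH]; rewrite ?subn0 //= lev_parent IH; lia. Qed.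

Lemma anc_lev v : anc v (lev v) = r.
Proof. by apply/eqP; rewrite -[_ == _]negbK -lev_gt0 lev_anc subnn. Qed.

Lemma anc_inj v i j : i <= lev v -> j <= lev v -> anc v i = anc v j -> i = j.
Proof. by move=> il jl /(congr1 lev); rewrite !lev_anc; lia. Qed.

Fixpoint ancs v n := if n is n'.+1 then parent v :: ancs (parent v) n' else [::].
Arguments ancs : simpl never.

Lemma ancs0 v : ancs v 0 = [::]. Proof. by []. Qed.
Lemma ancsS v n : ancs v n.+1 = parent v :: ancs (parent v) n. Proof. by []. Qed.

Lemma size_ancs v n : size (ancs v n) = n.
Proof. by elim: n v => // n IH v; rewrite ancsS /= IH. Qed.

Lemma last_ancs v n : last v (ancs v n) = anc v n.
Proof. by elim: n v => // n IH v; rewrite ancsS /= IH anc_parent. Qed.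

Lemma ancs_rcons v n : ancs v n.+1 = rcons (ancs v n) (anc v n.+1).
Proof. by elim: n v => // n IH v; rewrite ancsS IH ancsS rcons_cons anc_parent. Qed.

Lemma nth_ancs v n i x0 : i < n -> nth x0 (ancs v n) i = anc v i.+1.
Proof. by elim: n v i => [|n IH] v [|i] // lt; rewrite ancsS //= IH // anc_parent. Qed.

Lemma nth_ancs_cons v n k x0 : k <= n -> nth x0 (v :: ancs v n) k = anc v k.
Proof. by case: k => [|k] //= kn; rewrite nth_ancs. Qed.

Lemma mem_ancs v n y : y \in v :: ancs v n -> exists2 k, k <= n & y = anc v k.
Proof.
elim: n v => [|n IH] v; first by rewrite ancs0 inE => /eqP ->; exists 0.
rewrite ancsS inE => /orP[/eqP ->|]; first by exists 0.
by case/IH => k kn ->; exists k.+1; rewrite ?anc_parent.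
Qed.

Lemma anc_mem_ancs v n k : k <= n -> anc v k \in v :: ancs v n.
Proof. by move=> kn; rewrite -(nth_ancs_cons v v kn) mem_nth //= size_ancs. Qed.

Lemma path_ancs v n : n <= lev v -> path e v (ancs v n).
Proof.
elim: n v => [|n IH] v // nl; rewrite ancsS /= edge_parent -?lev_gt0; last lia.
by rewrite IH // lev_parent; lia.
Qed.

Lemma uniq_ancs v n : n <= lev v -> uniq (v :: ancs v n).
Proof.
elim: n v => [|n IH] v // nl; rewrite ancsS cons_uniq IH ?lev_parent 1?andbT; last lia.
apply/negP => /mem_ancs [k kn]; rewrite anc_parent => /(congr1 lev).
by rewrite lev_anc; lia.
Qed.

Lemma ancs_tpath v n : n <= lev v -> is_tpath e v (anc v n) (ancs v n).
Proof. by move=> nl; rewrite /is_tpath path_ancs // last_ancs eqxx uniq_ancs. Qed.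

Lemma tpath_ancs v n p : n <= lev v -> is_tpath e v (anc v n) p -> p = ancs v n.
Proof. by move=> nl hp; apply: tpath_uniq hp (ancs_tpath nl). Qed.

Lemma rpath_ancs v : is_tpath e v r (ancs v (lev v)).
Proof. by have := @ancs_tpath v _ (leqnn (lev v)); rewrite anc_lev. Qed.

Lemma levelE w n : level e r w n <-> n = lev w.
Proof.
split; first by case=> p [hp <-]; rewrite (tpath_uniq hp (rpath_ancs w)) size_ancs.
by move=> ->; exists (ancs w (lev w)); rewrite size_ancs; split; first exact: rpath_ancs.
Qed.

Lemma on_tpathE v n w : n <= lev v ->
  (on_tpath e v (anc v n) w <-> exists2 k, k <= n & w = anc v k).
Proof.
move=> nl; split; first by case=> p [hp]; rewrite (tpath_ancs nl hp) => /mem_ancs.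
by case=> k kn ->; exists (ancs v n); split; [exact: ancs_tpath | exact: anc_mem_ancs].
Qed.

Lemma tpath_split s t p : is_tpath e s t p -> exists i j,
  [/\ i <= lev s, j <= lev t, anc s i = anc t j &
      p = ancs s i ++ rev (belast t (ancs t j))].
Proof.
move=> hp.
pose S := s :: ancs s (lev s); pose T := t :: ancs t (lev t).
have root_in v : r \in v :: ancs v (lev v) by rewrite -(anc_lev v) anc_mem_ancs.
have hasS : has (mem T) S by apply/hasP; exists r; apply: root_in.
set i := find (mem T) S.
have iS : i <= lev s by move: hasS; rewrite has_find /= size_ancs.
have := nth_find s hasS; rewrite nth_ancs_cons // => /mem_ancs [j jt ci].
rewrite -/i in ci; exists i, j; split => //; apply: tpath_uniq hp _.
rewrite /is_tpath cat_path path_ancs // last_ancs ci.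
rewrite -[in X in path _ X](last_ancs t j) rev_path.
rewrite (eq_path (e' := e)); last by move=> x y; rewrite /= tree_sym.
rewrite path_ancs // last_cat last_ancs ci.
have -> : last (anc t j) (rev (belast t (ancs t j))) == t.
  by case: (j) => [|j']; rewrite ?ancs0 // ancsS /= rev_cons last_rcons.
have := uniq_ancs jt; rewrite lastI rcons_uniq last_ancs => /andP[cnb ub].
rewrite -cat_cons cat_uniq uniq_ancs // rev_uniq ub andbT /= andbT.
apply/hasPn => y; rewrite mem_rev => yb.
case: (mem_ancs (mem_belast yb)) => k kj yk.
apply/negP => /mem_ancs [k' k'i yk'].
case: (ltngtP k' i) => [lt|gt|eq]; [|lia|by move: cnb; rewrite -ci -eq -yk' yb].
have := before_find s lt; rewrite nth_ancs_cons; last lia.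
have yT : y \in T by rewrite yk anc_mem_ancs //; lia.
by move: yT; rewrite yk' => /= ->.
Qed.

Definition anc_at v l := anc v (lev v - l).

Lemma lev_anc_at v l : l <= lev v -> lev (anc_at v l) = l.
Proof. by move=> ll; rewrite /anc_at lev_anc; lia. Qed.

Lemma anc_at_anc_at v m l : m <= lev v -> l <= m -> anc_at (anc_at v m) l = anc_at v l.
Proof. by move=> mv lm; rewrite {1}/anc_at lev_anc_at // /anc_at ancD; congr anc; lia. Qed.

Lemma anc_anc_at v k : k <= lev v -> anc v k = anc_at v (lev v - k).
Proof. by move=> kl; rewrite /anc_at; congr anc; lia. Qed.

Lemma anc_at_lev v k : k <= lev v -> anc_at v (lev (anc v k)) = anc v k.
Proof. by move=> kv; rewrite lev_anc /anc_at; congr anc; lia. Qed.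

Lemma filter_ancs_level v m L : m <= lev v ->
  [seq y <- ancs v m | lev y == L] =
  if lev v - m <= L < lev v then [:: anc_at v L] else [::].
Proof.
elim: m v => [|m IH] v ml; first by rewrite ancs0; case: ifP => //; lia.
rewrite ancsS /= IH ?lev_parent; last lia.
case: (eqVneq (lev v).-1 L) => [<-|/eqP NE].
  have -> : ((lev v).-1 - m <= (lev v).-1 < (lev v).-1) = false by lia.
  have -> : (lev v - m.+1 <= (lev v).-1 < lev v) = true by lia.
  by rewrite /anc_at (_ : lev v - (lev v).-1 = 1) //; lia.
rewrite (_ : (lev v - m.+1 <= L < lev v) = ((lev v).-1 - m <= L < (lev v).-1)); last first.
  by apply/idP/idP; lia.
case: ifP => // /andP[_ lt_L].
by rewrite /anc_at lev_parent anc_parent; congr [:: anc _ _]; lia.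
Qed.

(* Nodes that are not kept are bypassed from the top down; in each bypass
   [u] is the child on the climb and [w] the next kept node above. *)
Lemma reduces_ancs (V : Type) (Bg : N -> V -> Prop) (keep : pred N) n b pre suf :
  (forall k, 0 < k <= n -> ~~ keep (anc b k) ->
    bag_sub (fun x => Bg (anc b k) x /\
                      Bg (head (anc b n.+1) [seq y <- ancs (anc b k) (n - k) | keep y]) x)
            (Bg (anc b k.-1))) ->
  reduces Bg (pre ++ b :: ancs b n ++ anc b n.+1 :: suf)
             (pre ++ b :: [seq y <- ancs b n | keep y] ++ anc b n.+1 :: suf).
Proof.
elim: n b pre => [|n IH] b pre cap; first exact: rt_refl.
have := IH (parent b) (rcons pre b); rewrite !cat_rcons !anc_parent ancsS => IHb.
apply: rt_trans (IHb _) _.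
  move=> k /andP[k0 kn]; rewrite !anc_parent prednK // => nk.
  have kn' : 0 < k.+1 <= n.+1 by lia.
  by have := cap k.+1 kn' nk; rewrite subSS.
rewrite /=; case: (boolP (keep (parent b))) => kp; first exact: rt_refl.
apply: rt_step.
exists pre, (behead ([seq y <- ancs (parent b) n | keep y] ++ anc b n.+2 :: suf)), b,
  (parent b), (head (anc b n.+2) [seq y <- ancs (parent b) n | keep y]).
split; [by case: (filter _ _) | by case: (filter _ _) | left].
by have := cap 1 isT kp; rewrite subn1.
Qed.

Section NewBags.
Variables (V : finType) (g : rel V) (B : N -> {set V}) (lam : nat).
Hypothesis td : tree_decomposition g e B.
Hypothesis lam_gt0 : 0 < lam.

Lemma bag_anc_between b k j x : k <= lev b -> j <= k ->
  x \in B b -> x \in B (anc b k) -> x \in B (anc b j).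
Proof.
move=> kl jk xb xk.
case: td => _ _ _ /(_ x b (anc b k) xb xk) [p /and3P[pp /eqP lp ap]].
move: lp; case: (shortenP pp) => p' pp' up' sub' lp'.
have hp : is_tpath e b (anc b k) p' by rewrite /is_tpath pp' lp' eqxx up'.
case: j jk => // j jk; apply: (allP ap); apply: sub'.
by rewrite (tpath_ancs kl hp) -(nth_ancs b b jk) mem_nth // size_ancs.
Qed.

Lemma bag_anc_at_between b l1 l l2 x : l1 <= l <= l2 -> l2 <= lev b ->
  x \in B (anc_at b l1) -> x \in B (anc_at b l2) -> x \in B (anc_at b l).
Proof.
move=> /andP[l1l ll2] l2b.
have lev2 : lev (anc_at b l2) = l2 by rewrite lev_anc_at.
have E l' : l' <= l2 -> anc_at b l' = anc (anc_at b l2) (l2 - l').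
  by move=> l'l2; rewrite -(anc_at_anc_at l2b l'l2) /anc_at lev2.
rewrite (E l ll2) (E l1); last lia.
by move=> x1 x2; apply: (bag_anc_between (k := l2 - l1)); rewrite ?lev2 //; lia.
Qed.

(* For [n > 0]: the largest multiple of [lam] below [n], i.e. the level of
   [sigma v] for [v] at level [n]. *)
Definition sync_below n := n.-1 %/ lam * lam.

Definition sync_above n := (n %/ lam).+1 * lam.

Lemma sync_below_le n : sync_below n <= n.-1. Proof. exact: leq_divM. Qed.

Lemma dvdn_sync_below n : lam %| sync_below n. Proof. exact: dvdn_mull. Qed.

Lemma sync_below_max l n : lam %| l -> l <= n.-1 -> l <= sync_below n.
Proof. by move=> dl ln; rewrite -(divnK dl) leq_mul2r leq_div2r ?orbT. Qed.

Lemma sync_below_dvdn n : lam %| n -> 0 < n -> sync_below n = n - lam.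
Proof.
case/dvdnP => [[|q] ->] // _; rewrite /sync_below.
have -> : (q.+1 * lam).-1 = q * lam + lam.-1 by rewrite mulSn; lia.
by rewrite divnMDl // divn_small ?addn0 ?mulSn; lia.
Qed.

Lemma sync_below_S n : ~~ (lam %| n) -> sync_below n.+1 = sync_below n.
Proof.
by case: n => [|n]; rewrite ?dvdn0 // /sync_below /= (divnS _ lam_gt0) => /negbTE ->.
Qed.

Lemma dvdn_sync_above n : lam %| sync_above n. Proof. exact: dvdn_mull. Qed.

Lemma sync_above_gt n : n < sync_above n. Proof. exact: ltn_ceil. Qed.

Lemma sync_above_le n : sync_above n <= n + lam.
Proof. by rewrite /sync_above mulSn addnC leq_add2r leq_divM. Qed.

Lemma sync_above_min n l : lam %| l -> n < l -> sync_above n <= l.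
Proof. by case/dvdnP => q -> lt; rewrite /sync_above leq_mul2r ltn_divLR // lt orbT. Qed.

Definition level_bag v x := exists l,
  [/\ l <= lev v, x \in B (anc_at v l) & (lam %| l) || (sync_below (lev v) <= l)].

Lemma level_bag_anc_at b m x : m <= lev b -> level_bag (anc_at b m) x <->
  exists l, [/\ l <= m, x \in B (anc_at b l) & (lam %| l) || (sync_below m <= l)].
Proof.
move=> mb; rewrite /level_bag lev_anc_at //.
by split; case=> l [lm xl cond]; exists l; rewrite ?(anc_at_anc_at mb lm) in xl *.
Qed.

Lemma level_bag_nonsync b l x : l < lev b -> ~~ (lam %| l) ->
  level_bag (anc_at b l) x -> level_bag (anc_at b l.+1) x.
Proof.
move=> lb nd; rewrite (@level_bag_anc_at _ _ x (ltnW lb)) (@level_bag_anc_at _ _ x lb).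
case=> l' [l'l xl' cond]; exists l'; split; [lia | done | ].
by rewrite sync_below_S.
Qed.

Lemma level_bag_sync_cap b lu lv L x : lu <= lev b -> L < lv < lu ->
  lam %| lv -> lam %| L ->
  level_bag (anc_at b lv) x -> level_bag (anc_at b L) x -> level_bag (anc_at b lu) x.
Proof.
move=> lub /andP[Llv lvlu] dlv dL.
rewrite !level_bag_anc_at //; try lia.
case=> l1 [l1v xl1 /orP[d1|s1]] [l2 [l2L xl2 _]].
  by exists l1; rewrite d1; split => //; lia.
have L_le : L <= sync_below lv by apply: sync_below_max => //; lia.
have := sync_below_le lv.
exists (sync_below lv); rewrite dvdn_sync_below; split => //; first lia.
by apply: (bag_anc_at_between (l1 := l2) (l2 := l1)) => //; lia.
Qed.

Lemma level_bag_top_cap bs bt lc L x : L <= lev bs -> L <= lev bt ->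
  anc_at bs lc = anc_at bt lc -> lc < L <= lc + lam -> lam %| L ->
  level_bag (anc_at bt lc) x -> level_bag (anc_at bt L) x -> level_bag (anc_at bs L) x.
Proof.
move=> Ls Lt Ec /andP[lcL Lle] dL.
have common l : l <= lc -> anc_at bs l = anc_at bt l.
  by move=> ll; rewrite -(@anc_at_anc_at bs lc l) ?Ec ?anc_at_anc_at //; lia.
rewrite !level_bag_anc_at //; last lia.
case=> l1 [l1c xl1 c1] [l2 [l2L xl2 c2]].
have lam_L : lam <= L by apply: dvdn_leq => //; lia.
have belowL := sync_below_dvdn dL (leq_trans lam_gt0 lam_L).
rewrite belowL in c2 *.
case: (boolP (lam %| l1)) => d1.
  by exists l1; rewrite common ?d1 //; split => //; lia.
case: (leqP (L - lam) l1) => m1.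
  by exists l1; rewrite common ?m1 ?orbT //; split => //; lia.
have lcE : lc = L - lam.
  have := sync_below_max (n := lc) (dvdn_sub dL (dvdnn lam)).
  by move: c1; rewrite (negbTE d1) /=; lia.
case: (leqP lc l2) => m2.
  exists lc; rewrite lcE leqnn orbT; split => //; first lia.
  rewrite -lcE common //; apply: (bag_anc_at_between (l1 := l1) (l2 := l2)) => //; lia.
exists l2; split; [lia | rewrite common //; lia | ].
by move: c2; rewrite -lcE leqNgt m2 orbF => ->.
Qed.

Lemma syncE w : sync e r lam w <-> lam %| lev w.
Proof.
split; first by case=> n [/levelE ->].
by move=> dw; exists (lev w); split => //; apply/levelE.
Qed.

Lemma sigmaE v s : v != r -> is_sigma e r lam v s -> s = anc v (lev v - sync_below (lev v)).
Proof.
rewrite -lev_gt0 => lv_gt0 [p [hp sp /syncE ss no_sync]].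
have below_le := sync_below_le (lev v).
have hU := tpath_uniq hp (rpath_ancs v); subst p.
set U := ancs v (lev v) in sp no_sync; set i := index s U in no_sync.
have iU : i < lev v by rewrite -(size_ancs v (lev v)) index_mem.
have sE : s = anc v i.+1 by rewrite -(nth_ancs v r iU) nth_index.
rewrite sE lev_anc in ss.
have first_sync i' : i' < i -> ~~ (lam %| lev v - i'.+1).
  move=> ii; apply/negP => d.
  apply: (no_sync (anc v i'.+1)); last by apply/syncE; rewrite lev_anc.
  rewrite -(nth_ancs v r (ltn_trans ii iU)) -(nth_take r ii) mem_nth //.
  by rewrite size_take size_ancs iU.
have le1 : lev v - i.+1 <= sync_below (lev v) by apply: sync_below_max => //; lia.
have le2 : sync_below (lev v) <= lev v - i.+1.
  rewrite leqNgt; apply/negP => lt.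
  have ii : (lev v - sync_below (lev v)).-1 < i by lia.
  move: (first_sync _ ii).
  by rewrite (_ : lev v - _.+1 = sync_below (lev v)) ?dvdn_sync_below //; lia.
by rewrite sE; congr anc; lia.
Qed.

Lemma sigma_ex v : v != r -> is_sigma e r lam v (anc v (lev v - sync_below (lev v))).
Proof.
rewrite -lev_gt0 => lv_gt0; have below_le := sync_below_le (lev v).
set k := lev v - sync_below (lev v).
have uU : uniq (ancs v (lev v)) by have /andP[] := uniq_ancs (leqnn (lev v)).
have ek : anc v k = nth r (ancs v (lev v)) k.-1 by rewrite nth_ancs ?prednK //; lia.
exists (ancs v (lev v)); split; first exact: rpath_ancs.
- by rewrite ek mem_nth // size_ancs; lia.
- by apply/syncE; rewrite lev_anc (_ : lev v - k = sync_below (lev v)) ?dvdn_sync_below //; lia.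
move=> w; rewrite ek index_uniq ?size_ancs //; last lia.
move=> wt /syncE dw.
set i := index w (take k.-1 (ancs v (lev v))).
have ik : i < k.-1.
  have : i < size (take k.-1 (ancs v (lev v))) by rewrite index_mem.
  have k_lt : k.-1 < lev v by lia.
  by rewrite size_take size_ancs k_lt.
have wE : w = anc v i.+1.
  have il : i < lev v by lia.
  by rewrite -(nth_ancs v r il) -(nth_take r ik) nth_index.
rewrite wE lev_anc in dw.
have i_le : lev v - i.+1 <= (lev v).-1 by lia.
by have := sync_below_max dw i_le; lia.
Qed.

Lemma new_bagE v x : new_bag e r lam B v x <-> level_bag v x.
Proof.
rewrite /new_bag /level_bag; case: eqVneq => [->|vr].
  rewrite lev_root /anc_at lev_root; split; first by exists 0; rewrite dvdn0.
  by case=> l [l0 xb _]; move: xb; rewrite (_ : l = 0) //; lia.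
have lv_gt0 : 0 < lev v by rewrite lev_gt0.
have below_le := sync_below_le (lev v).
have on_rpath w : on_tpath e v r w <-> exists2 k, k <= lev v & w = anc v k.
  by have := @on_tpathE v (lev v) w (leqnn _); rewrite anc_lev.
split.
- case=> w [/on_rpath [k kl ->] xb H].
  exists (lev v - k); rewrite /anc_at (_ : lev v - (lev v - k) = k); last lia.
  split => //; first lia.
  case: H => [[s [/(sigmaE vr) -> ]] | /syncE]; last by rewrite lev_anc => ->.
  case/on_tpathE; first lia.
  by move=> k' k'l /anc_inj E; rewrite E; [apply/orP; right; lia | lia | lia].
- case=> l [ll xb H]; exists (anc_at v l); split => //.
  + by apply/on_rpath; exists (lev v - l) => //; lia.
  case/orP: H => [d|m]; first by right; apply/syncE; rewrite lev_anc_at.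
  left; exists (anc v (lev v - sync_below (lev v))); split; first exact: sigma_ex.
  by apply/on_tpathE; [lia | exists (lev v - l); [lia | done]].
Qed.

Lemma level_bag_climb b lc l x : lc < l < lev b -> l != sync_above lc ->
  level_bag (anc_at b l) x ->
  (sync_above lc < l -> level_bag (anc_at b (sync_above lc)) x) ->
  level_bag (anc_at b l.+1) x.
Proof.
move=> /andP[lc_l l_b] l_L xl xL.
have [dl|ndl] := boolP (lam %| l); last exact: level_bag_nonsync.
have L_lt : sync_above lc < l by rewrite ltn_neqAle eq_sym l_L sync_above_min.
apply: (level_bag_sync_cap _ _ _ _ xl (xL L_lt)) => //; first by rewrite L_lt /=.
exact: dvdn_sync_above.
Qed.

Local Notation nbag := (new_bag e r lam B).

(* What remains of the climb from [b] to [anc b k] after the bypasses: [b]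
   and the first synchronization node below the top; the top is left out. *)
Definition climb_reduced b k :=
  let L := sync_above (lev (anc b k)) in
  if k is 0 then [::] else b :: (if L < lev b then [:: anc_at b L] else [::]).

Lemma reduces_climb b k suf : k <= lev b ->
  reduces nbag (belast b (ancs b k) ++ anc b k :: suf) (climb_reduced b k ++ anc b k :: suf).
Proof.
case: k => [|n] nb; first exact: rt_refl.
rewrite ancs_rcons belast_rcons /climb_reduced.
have lev_c : lev (anc b n.+1) = lev b - n.+1 by rewrite lev_anc.
have L_gt := sync_above_gt (lev (anc b n.+1)).
move Lc: (sync_above _) L_gt => L L_gt.
have -> : (if L < lev b then [:: anc_at b L] else [::]) = [seq y <- ancs b n | lev y == L].
  have L_ge : lev b - n <= L by lia.
  by rewrite filter_ancs_level ?L_ge //; lia.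
apply: (reduces_ancs [::]) => k /andP[k0 kn] nk x [x_k x_head].
have ak : anc b k = anc_at b (lev b - k) by rewrite anc_anc_at //; lia.
have ak1 : anc b k.-1 = anc_at b (lev b - k).+1 by rewrite anc_anc_at; [congr anc_at; lia | lia].
move/new_bagE: x_k; move/new_bagE: x_head; rewrite ak1 ak => x_head x_k; apply/new_bagE.
rewrite ak lev_anc_at in nk; last lia.
apply: (level_bag_climb (lc := lev (anc b n.+1))) x_k _; rewrite ?Lc //; first lia.
move=> L_lt; move: x_head; rewrite filter_ancs_level lev_anc_at; try lia.
rewrite ifT ?anc_at_anc_at //; lia.
Qed.

Lemma bypass_top s t i j L : i <= lev s -> j <= lev t -> anc s i = anc t j ->
  lev (anc s i) < L <= lev (anc s i) + lam -> lam %| L -> L < lev s -> L < lev t ->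
  bypass nbag [:: s; anc_at s L; anc s i; anc_at t L; t] [:: s; anc_at s L; anc_at t L; t].
Proof.
move=> si tj top L_win dL Ls Lt.
exists [:: s], [:: t], (anc_at s L), (anc s i), (anc_at t L); split => //; left.
move=> x [/new_bagE x_c /new_bagE x_t]; apply/new_bagE.
have c_s : anc_at s (lev (anc s i)) = anc s i by rewrite anc_at_lev.
have c_t : anc_at t (lev (anc s i)) = anc s i by rewrite top anc_at_lev.
rewrite -c_t in x_c.
exact: level_bag_top_cap (ltnW Ls) (ltnW Lt) (etrans c_s (esym c_t)) L_win dL x_c x_t.
Qed.

Lemma comb_length_climbs s t i j : i <= lev s -> j <= lev t -> anc s i = anc t j ->
  comb_length_le nbag (climb_reduced s i ++ anc s i :: rev (climb_reduced t j)) 3.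
Proof.
move=> si tj top.
have L_win : lev (anc s i) < sync_above (lev (anc s i)) <= lev (anc s i) + lam.
  by rewrite sync_above_gt sync_above_le.
have := bypass_top si tj top L_win (dvdn_sync_above _).
rewrite /climb_reduced -top; move: (sync_above _) => L top_bypass; clear L_win.
case: i si top top_bypass => [|i] si top top_bypass;
  case: j tj top top_bypass => [|j] tj top top_bypass /=;
  try case: ifP => Ls; try case: ifP => Lt;
  try by eexists; split; [exact: rt_refl |].
by eexists; split; [apply: rt_step; exact: top_bypass |].
Qed.

End NewBags.

End RootedTree.

Theorem lemma4p3 (V N : finType) (g : rel V) (e : rel N) (B : N -> {set V})
  (r : N) (d lam : nat) :
  tree_decomposition g e B ->
  (forall (v : N) (n : nat), level e r v n -> n <= d) ->
  1 <= lam <= d ->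
  comb_diameter_le e (new_bag e r lam B) 3.
Proof.
move=> td _ /andP[lam_gt0 _] s t p.
have e_tree : is_tree e by case: td.
case/(tpath_split r e_tree) => i [j [si tj top ->]].
apply: comb_length_le_reduces (comb_length_climbs td lam_gt0 si tj top).
rewrite -cat_cons lastI last_ancs cat_rcons.
apply: rt_trans (reduces_climb td lam_gt0 _ si) _.
have := reduces_rev (reduces_climb td lam_gt0 (rev (climb_reduced r e_tree lam s i)) tj).
by rewrite !rev_cat_cons revK -top.
Qed.
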